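(* Let $m=p_1^{\alpha_1}p_2^{\alpha_2}$, where $p_1,p_2>2$ are distinct primes and $\alpha_1,\alpha_2$ are positive integers. Let $t=\mathrm{ord}_m(2)$ and let $\gamma\in\mathbb{F}_{2^t}^*$ be a primitive $m$th root of unity. Then every $S_m$-decoding polynomial has at least $3$ monomials (i.e. at least 3 nonzero coefficients).
   Context: $\mathrm{ord}_m(2)$ is the multiplicative order of $2$ modulo $m$. The canonical set of $m$ is $S_m=\{s_{01},s_{10},s_{11}\}\subseteq\mathbb{Z}_m$, where for $\sigma=(\sigma_1,\sigma_2)\in\{0,1\}^2\setminus\{(0,0)\}$, $s_\sigma$ is the unique element of $\mathbb{Z}_m$ with $s_\sigma\equiv\sigma_1 \pmod{p_1^{\alpha_1}}$ and $s_\sigma\equiv \sigma_2\pmod{p_2^{\alpha_2}}$ (so $s_{11}=1$). An $S_m$-decoding polynomial is a polynomial $P(X)\in\mathbb{F}_{2^t}[X]$ such that $P(\gamma^s)=0$ for every $s\in S_m$ and $P(\gamma^0)=P(1)=1$. *)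

From mathcomp Require Import all_boot all_order all_algebra all_field.
Set Implicit Arguments. Unset Strict Implicit. Unset Printing Implicit Defensive.
Import GRing.Theory.
Local Open Scope ring_scope.

Definition is_mult_order (m a t : nat) : Prop :=
  [/\ (0 < t)%N, (a ^ t = 1 %[mod m])%N &
      forall k : nat, (0 < k)%N -> (a ^ k = 1 %[mod m])%N -> (t <= k)%N].

(* s_sigma : the unique element of Z_m (m = q1 * q2, coprime) with
   s = sigma1 mod q1 and s = sigma2 mod q2, represented in [0, m). *)
Definition s_sigma (q1 q2 : nat) (sig1 sig2 : bool) : nat :=
  (chinese q1 q2 sig1 sig2 %% (q1 * q2))%N.

Definition canonical_set (p1 a1 p2 a2 : nat) : seq nat :=
  [:: s_sigma (p1 ^ a1) (p2 ^ a2) false true;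
      s_sigma (p1 ^ a1) (p2 ^ a2) true false;
      s_sigma (p1 ^ a1) (p2 ^ a2) true true].

Definition decoding_poly (F : fieldType) (gamma : F) (S : seq nat) (P : {poly F}) : Prop :=
  (forall s, s \in S -> P.[gamma ^+ s] = 0) /\ P.[1] = 1.

Definition num_monomials (F : fieldType) (P : {poly F}) : nat :=
  count (fun c => c != 0) (polyseq P).

(* Only two facts about S_m matter: gamma is nonzero and s_01 + s_10 = s_11 in Z_m,
   so the roots x = gamma^s_01, y = gamma^s_10 and their product x y = gamma^s_11 all
   kill P.  A polynomial with at most two monomials cannot do this while P(1) = 1:
   after factoring out the least power of X it becomes a + b X^d with a + b = 1, and
   b x^d = b y^d = b (x y)^d = -a forces a^2 = b^2 (x y)^d = -a b, i.e. a (a + b) = a = 0. *)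
From mathcomp Require Import all_boot all_order all_algebra all_field.
Set Implicit Arguments. Unset Strict Implicit. Unset Printing Implicit Defensive.
Import GRing.Theory.
Local Open Scope ring_scope.

Section PolySupport.

Variables (F : fieldType) (P : {poly F}).

Definition poly_support : seq nat := [seq i <- iota 0 (size P) | P`_i != 0].

Lemma num_monomials_support : num_monomials P = size poly_support.
Proof. by rewrite /num_monomials size_filter -{1}(mkseq_nth 0 P) count_map. Qed.

Lemma horner_support (x : F) : P.[x] = \sum_(i <- poly_support) P`_i * x ^+ i.
Proof.
rewrite horner_coef -(big_mkord xpredT (fun i => P`_i * x ^+ i)) big_filter.
rewrite [RHS]big_rmcond /index_iota ?subn0 //.
by move=> i /negPn/eqP ->; rewrite mul0r.
Qed.

Lemma sorted_poly_support : sorted ltn poly_support.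
Proof. exact/sorted_filter/iota_ltn_sorted/ltn_trans. Qed.

Lemma coef_poly_support_neq0 i : i \in poly_support -> P`_i != 0.
Proof. by rewrite mem_filter => /andP[]. Qed.

End PolySupport.

Lemma binomial_root_shift (F : fieldType) (a b x : F) (i j : nat) :
  (i <= j)%N -> x != 0 -> a * x ^+ i + b * x ^+ j = 0 -> a + b * x ^+ (j - i) = 0.
Proof.
move=> le_ij x_neq0; rewrite -{1}(subnKC le_ij) exprD mulrCA [a * _]mulrC -mulrDr.
by move/eqP; rewrite mulf_eq0 expf_eq0 (negPf x_neq0) andbF => /eqP.
Qed.

Lemma binomial_mul_roots (F : fieldType) (a b x y : F) (d : nat) :
  a + b = 1 -> a + b * x ^+ d = 0 -> a + b * y ^+ d = 0 ->
  a + b * (x * y) ^+ d = 0 -> a = 0.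
Proof.
move=> ab1 /addr0_eq rx /addr0_eq ry /addr0_eq rxy.
have sq_a : a * a = - (a * b).
  by rewrite -mulrNN {1}rx ry mulrACA -exprMn -mulrA -rxy mulrN mulrC.
by rewrite -[a]mulr1 -ab1 mulrDr sq_a addNr.
Qed.

Lemma three_monomials_of_mul_roots (F : fieldType) (P : {poly F}) (x y : F) :
  x != 0 -> y != 0 -> P.[1] = 1 ->
  root P x -> root P y -> root P (x * y) -> (3 <= num_monomials P)%N.
Proof.
move=> x_neq0 y_neq0 P1 /eqP Px /eqP Py /eqP Pxy.
have xy_neq0 : x * y != 0 by rewrite mulf_neq0.
move: P1 Px Py Pxy; rewrite num_monomials_support !horner_support.
have := sorted_poly_support P; have := @coef_poly_support_neq0 _ P.
case: (poly_support P) => [|i [|j [|k s]]] // nz_coef sorted_ij.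
- by rewrite big_nil => /eqP; rewrite eq_sym oner_eq0.
- rewrite !big_seq1 expr1n mulr1 => P1 _ _ /eqP.
  by rewrite mulf_eq0 P1 oner_eq0 expf_eq0 (negPf xy_neq0) andbF.
- have le_ij : (i <= j)%N by move: sorted_ij => /andP[/ltnW].
  rewrite !big_cons !big_nil !addr0 !expr1n !mulr1 => P1.
  move=> /(binomial_root_shift le_ij x_neq0) rx /(binomial_root_shift le_ij y_neq0) ry.
  move=> /(binomial_root_shift le_ij xy_neq0) rxy.
  have := nz_coef i (mem_head _ _).
  by rewrite (binomial_mul_roots P1 rx ry rxy) eqxx.
Qed.

Lemma chineseD (m1 m2 r1 r2 s1 s2 : nat) :
  chinese m1 m2 (r1 + s1) (r2 + s2) = (chinese m1 m2 r1 r2 + chinese m1 m2 s1 s2)%N.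
Proof. by rewrite /chinese !mulnDl addnACA. Qed.

Lemma s_sigma_add (q1 q2 : nat) :
  (s_sigma q1 q2 false true + s_sigma q1 q2 true false
    = s_sigma q1 q2 true true %[mod q1 * q2])%N.
Proof. by rewrite /s_sigma modnDm modn_mod -chineseD. Qed.

Theorem lemma3 (p1 p2 a1 a2 m t : nat) (F : finFieldType) (gamma : F)
  (hp1 : prime p1) (hp2 : prime p2) (hp1g : (2 < p1)%N) (hp2g : (2 < p2)%N)
  (hneq : p1 != p2) (ha1 : (0 < a1)%N) (ha2 : (0 < a2)%N)
  (hm : m = (p1 ^ a1 * p2 ^ a2)%N)
  (ht : is_mult_order m 2 t)
  (hF : #|F| = (2 ^ t)%N)
  (hgamma : m.-primitive_root gamma) :
  forall P : {poly F},
    decoding_poly gamma (canonical_set p1 a1 p2 a2) P -> (3 <= num_monomials P)%N.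
Proof.
move=> P [P_S P1].
have gamma_neq0 : gamma != 0.
  apply: contra_eq_neq (prim_expr_order hgamma) => ->.
  by rewrite expr0n gtn_eqF ?(prim_order_gt0 hgamma) // eq_sym oner_neq0.
pose s := s_sigma (p1 ^ a1) (p2 ^ a2).
have root_S k : k \in [:: s false true; s true false; s true true] -> root P (gamma ^+ k).
  by move=> /P_S /eqP.
apply: (three_monomials_of_mul_roots (x := gamma ^+ s false true) (y := gamma ^+ s true false)).
- exact: expf_neq0.
- exact: expf_neq0.
- exact: P1.
- by apply: root_S; rewrite !inE eqxx.
- by apply: root_S; rewrite !inE eqxx orbT.
- have sum_s : (s false true + s true false = s true true %[mod m])%N.
    by rewrite hm s_sigma_add.
  rewrite -exprD -(prim_expr_mod hgamma) sum_s (prim_expr_mod hgamma).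
  by apply: root_S; rewrite !inE eqxx !orbT.
Qed.
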